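(* Let $\Sigma\in\mathsf{c}\text{-}\mathsf{Fan}^{+-}_{\rm sc}(2)$ have $n$ two-dimensional cones and quiddity sequence $\mathrm{s}(\Sigma)=(a_1,\dots,a_{n-2};0,0)$. If $n\ge5$, then there exists $2\le i\le n-3$ with $a_i=1$.
   Context: $\mathsf{c}\text{-}\mathsf{Fan}^{+-}_{\rm sc}(2)$: complete nonsingular fans in $\mathbb{R}^2$ (each 2-dimensional cone generated by a $\mathbb{Z}$-basis) containing $\operatorname{cone}\{(1,0),(0,1)\}$, $\operatorname{cone}\{(-1,0),(0,-1)\}$ and $\operatorname{cone}\{(-1,0),(0,1)\}$, with every cone in a closed coordinate quadrant and every ray in exactly two 2-dimensional cones. Its primitive ray generators in clockwise order are $v_1=(1,0),v_2,\dots,v_{n-2}=(0,-1),v_{n-1}=(-1,0),v_n=(0,1)$, and the integers $a_j$ are defined by $a_jv_j=v_{j-1}+v_{j+1}$ (indices mod $n$). *)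

From mathcomp Require Import all_boot all_order all_algebra.
Set Implicit Arguments. Unset Strict Implicit. Unset Printing Implicit Defensive.
Import Order.TTheory GRing.Theory Num.Theory.
Local Open Scope ring_scope.

Definition det2 (u w : int * int) : int := u.1 * w.2 - u.2 * w.1.

Definition prevn (n j : nat) : nat := if j == 1%N then n else j.-1.
Definition nextn (n j : nat) : nat := if j == n then 1%N else j.+1.

Definition inQuad (sx sy : int) (u : int * int) : Prop :=
  0 <= sx * u.1 /\ 0 <= sy * u.2.

Definition cone_in_closed_quadrant (u w : int * int) : Prop :=
  exists sx sy : int, (sx = 1 \/ sx = -1) /\ (sy = 1 \/ sy = -1) /\
    inQuad sx sy u /\ inQuad sx sy w.

(* v 1, ..., v n are the primitive ray generators, in clockwise order, of a
   fan Sigma in c-Fan^{+-}_sc(2) with n two-dimensional cones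
   cone{v_j, v_{j+1}} (indices mod n). *)
Definition is_cFan_pm_sc2 (n : nat) (v : nat -> int * int) : Prop :=
  [/\ (4 <= n)%N,
      v 1%N = (1, 0), v (n - 2)%N = (0, -1), v (n - 1)%N = (-1, 0) & v n = (0, 1)]
  /\ (* each 2-dim cone is generated by a Z-basis, oriented clockwise *)
     (forall j : nat, (1 <= j <= n)%N -> det2 (v j) (v (nextn n j)) = -1)
  /\
     (forall j : nat, (1 <= j <= n)%N -> cone_in_closed_quadrant (v j) (v (nextn n j)))
  /\ (* the remaining rays lie outside the three given cones (the fan turns
        exactly once: rays v_2..v_{n-3} lie in the open fourth quadrant) *)
     (forall j : nat, (2 <= j <= n - 3)%N -> 0 < (v j).1 /\ (v j).2 < 0).

Definition is_quiddity (n : nat) (v : nat -> int * int) (a : nat -> int) : Prop :=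
  forall j : nat, (1 <= j <= n)%N ->
    a j * (v j).1 = (v (prevn n j)).1 + (v (nextn n j)).1 /\
    a j * (v j).2 = (v (prevn n j)).2 + (v (nextn n j)).2.

(** Measure rays by [norm1 u = u.1 - u.2], which is the l^1 norm on the
    closed fourth quadrant containing v_1, ..., v_{n-2}.  Pick an inner ray
    v_i (2 <= i <= n-3) of maximal norm.  Its neighbours have norm between 1
    and norm1 (v_i), so a_i * norm1 (v_i) = norm1 (v_{i-1}) + norm1 (v_{i+1})
    forces a_i = 1 or a_i = 2, and a_i = 2 only if v_{i+1} has the same norm
    as v_i.  But two rays of equal norm have a determinant divisible by that
    norm, which is at least 2 for an inner ray, while consecutive rays have
    determinant -1. *)
From mathcomp Require Import all_boot all_order all_algebra zify ring.
Set Implicit Arguments. Unset Strict Implicit. Unset Printing Implicit Defensive.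
Import Order.TTheory GRing.Theory Num.Theory.
Local Open Scope ring_scope.

Definition norm1 (u : int * int) : int := u.1 - u.2.

Lemma exists_arg_max_in_range (f : nat -> int) (lo hi : nat) : (lo <= hi)%N ->
  exists2 i, (lo <= i <= hi)%N & forall j, (lo <= j <= hi)%N -> f j <= f i.
Proof.
move=> lo_hi; have lo_lt : (lo < hi.+1)%N by [].
have [i lo_i max_i] :=
  @arg_maxP _ _ 'I_hi.+1 (Ordinal lo_lt) (fun i => lo <= i)%N (fun i => f i) (leqnn lo).
exists i; first by rewrite lo_i -ltnS ltn_ord.
move=> j /andP[lo_j j_hi]; rewrite -ltnS in j_hi.
exact: (max_i (Ordinal j_hi)).
Qed.

Lemma absz_eq1_of_mulzN1 (c d : int) : c * d = -1 -> `|c|%N = 1%N.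
Proof. by move/(congr1 absz); rewrite abszM => /eqP; rewrite muln_eq1 => /andP[/eqP]. Qed.

Lemma det2_eq_norm1_mul (u w : int * int) :
  norm1 u = norm1 w -> det2 u w = norm1 u * (w.2 - u.2).
Proof.
rewrite /det2 /norm1 => eq_norm.
have -> : w.1 = u.1 - u.2 + w.2 by lia.
ring.
Qed.

Lemma quiddity_coef_cases (a N N1 N2 : int) :
  1 <= N1 <= N -> 1 <= N2 <= N -> a * N = N1 + N2 -> a = 1 \/ a = 2 /\ N2 = N.
Proof.
move=> /andP[N1_ge1 N1_le] /andP[N2_ge1 N2_le] eq_sum.
have N_gt0 : 0 < N by lia.
have a_gt0 : 0 < a by rewrite -(pmulr_lgt0 _ N_gt0) eq_sum; lia.
have a_le2 : a <= 2 by rewrite -(ler_pM2r N_gt0) eq_sum; lia.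
have [-> | a2] : a = 1 \/ a = 2 by lia.
  by left.
by right; split => //; move: eq_sum; rewrite a2; lia.
Qed.

Lemma quiddity_norm1 (n : nat) (v : nat -> int * int) (a : nat -> int) (i : nat) :
  is_quiddity n v a -> (1 < i < n)%N ->
  a i * norm1 (v i) = norm1 (v i.-1) + norm1 (v i.+1).
Proof.
move=> quid i_in; have [eq1 eq2] := quid i ltac:(lia).
have prev_i : prevn n i = i.-1 by rewrite /prevn; case: eqP => //; lia.
have next_i : nextn n i = i.+1 by rewrite /nextn; case: eqP => //; lia.
rewrite prev_i next_i in eq1 eq2.
by rewrite /norm1 mulrBr eq1 eq2; lia.
Qed.

Section FanRays.

Variables (n : nat) (v : nat -> int * int).
Hypothesis fan : is_cFan_pm_sc2 n v.

Lemma fan_det_next (j : nat) : (1 <= j < n)%N -> det2 (v j) (v j.+1) = -1.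
Proof.
have [_ [det_next _]] := fan => j_in.
have next_j : nextn n j = j.+1 by rewrite /nextn; case: eqP => //; lia.
by rewrite -next_j det_next //; lia.
Qed.

Lemma fan_norm1_inner (j : nat) : (2 <= j <= n - 3)%N -> 2 <= norm1 (v j).
Proof.
have [_ [_ [_ fourth_quadrant]]] := fan => /fourth_quadrant.
by rewrite /norm1; lia.
Qed.

Lemma fan_norm1_bounded_by_inner_max (i : nat) :
  (2 <= i <= n - 3)%N ->
  (forall j, (2 <= j <= n - 3)%N -> norm1 (v j) <= norm1 (v i)) ->
  forall j, (1 <= j <= n - 2)%N -> 1 <= norm1 (v j) <= norm1 (v i).
Proof.
have [[n_ge4 v_1 v_nm2 _ _] _] := fan => i_in i_max j j_in.
have norm_i := fan_norm1_inner i_in.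
have [j_inner | j_boundary] := boolP (2 <= j <= n - 3)%N.
  by have := fan_norm1_inner j_inner; have := i_max j j_inner; lia.
rewrite negb_and -!ltnNge in j_boundary.
have [-> | ->] : j = 1%N \/ j = (n - 2)%N by lia.
  by move: norm_i; rewrite v_1 /norm1 /=; lia.
by move: norm_i; rewrite v_nm2 /norm1 /=; lia.
Qed.

End FanRays.

Theorem lemma2p11 (n : nat) (v : nat -> int * int) (a : nat -> int) :
  is_cFan_pm_sc2 n v -> is_quiddity n v a -> (5 <= n)%N ->
  exists i : nat, (2 <= i <= n - 3)%N /\ a i = 1.
Proof.
move=> fan quid n_ge5.
have [i i_in i_max] :=
  @exists_arg_max_in_range (fun j => norm1 (v j)) 2 (n - 3) ltac:(lia).
exists i; split => //.
have i_inner : (1 < i < n)%N by lia.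
have bounded := fan_norm1_bounded_by_inner_max fan i_in i_max.
have [|[_ eq_norm]] := quiddity_coef_cases (bounded i.-1 ltac:(lia))
  (bounded i.+1 ltac:(lia)) (quiddity_norm1 quid i_inner) => //.
have := fan_det_next fan (j := i) ltac:(lia).
rewrite det2_eq_norm1_mul // => /absz_eq1_of_mulzN1.
by have := fan_norm1_inner fan i_in; lia.
Qed.
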